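(* Let $F$ be a field of characteristic two, let $\mathfrak b$ be a $4$-dimensional isotropic symmetric bilinear form over $F$, and let $K=F(\sqrt\alpha)$ for some $\alpha\in F^\times\setminus F^{\times2}$. If $\mathfrak b\otimes\langle\!\langle\alpha\rangle\!\rangle$ is (isometric to) a bilinear Pfister form, then $\mathfrak b_K$ is similar to a bilinear Pfister form.
   Context: $\langle\!\langle\alpha\rangle\!\rangle=\langle1,\alpha\rangle$; a bilinear Pfister form is a form $\langle1,\alpha_1\rangle\otimes\cdots\otimes\langle1,\alpha_n\rangle$ with $\alpha_i\in F^\times$. Two forms are similar if one is isometric to a nonzero scalar multiple of the other. $\mathfrak b_K$ is the scalar extension to $K$. *)

(* Symmetric bilinear forms of dimension n over a field are
   represented by their Gram matrices 'M[F]_n (b(x,y) = x *m B *m y^T). *)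
From HB Require Import structures.
From mathcomp Require Import all_boot all_order all_algebra all_field.
From mathcomp Require Import mxtens.
Set Implicit Arguments. Unset Strict Implicit. Unset Printing Implicit Defensive.
Import Order.TTheory GRing.Theory.
Local Open Scope ring_scope.

Section BilForms.
Variable F : fieldType.

Definition bf_symmetric n (B : 'M[F]_n) : Prop := B^T = B.

Definition bf_isotropic n (B : 'M[F]_n) : Prop :=
  exists v : 'rV[F]_n, v != 0 /\ v *m B *m v^T = 0.

Definition bf_isometric n (A B : 'M[F]_n) : Prop :=
  exists P : 'M[F]_n, P \in unitmx /\ B = P *m A *m P^T.

Definition bf_similar n (A B : 'M[F]_n) : Prop :=
  exists c : F, c != 0 /\ bf_isometric A (c *: B).

Definition pf1 (a : F) : 'M[F]_2 :=
  diag_mx (\row_(i < 2) (if i == ord0 then 1 else a)).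

Fixpoint pdim (s : seq F) : nat :=
  match s with [::] => 1%N | _ :: s' => (pdim s' * 2)%N end.

Fixpoint pfister (s : seq F) : 'M[F]_(pdim s) :=
  match s return 'M[F]_(pdim s) with
  | [::] => 1%:M
  | a :: s' => pfister s' *t pf1 a
  end.

Definition bf_is_pfister n (B : 'M[F]_n) : Prop :=
  exists s : seq F, all (fun a => a != 0) s /\
    exists e : pdim s = n, bf_isometric (castmx (e, e) (pfister s)) B.

Definition bf_similar_to_pfister n (B : 'M[F]_n) : Prop :=
  exists s : seq F, all (fun a => a != 0) s /\
    exists e : pdim s = n, bf_similar B (castmx (e, e) (pfister s)).

End BilForms.

(* In characteristic 2 the quadratic map q(x) = b(x, x) is additive and
   q(c x) = c^2 q(x), so the isotropic vectors of a symmetric bilinear form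
   form a subspace Z; the invariant used throughout is Z^perp <= Z.

   A bilinear Pfister form <<a_1, ..., a_k>> is the trace form (constant
   coefficient of x y) of the algebra F[t_1, ..., t_k]/(t_i^2 - a_i), in which
   x^2 = q(x).  Hence q is multiplicative, Z is an ideal, and when Z contains
   some w != 0, any x in Z^perp satisfies q(x) b(w, h) = b(x, w (x h)) = 0 for
   all h, so q(x) = 0: an isotropic Pfister form has Z^perp <= Z.

   Writing vectors over K = F(r), r^2 = alpha, as x1 + r x2 gives
   q_K(x1 + r x2) = q(x1) + alpha q(x2) = (b (x) <<alpha>>)(x1, x2), so the
   invariant passes from b (x) <<alpha>> to b_K.  Finally, a nondegenerate,
   non-alternating, isotropic 4-dimensional form with Z^perp <= Z has a basis
   v, w, g1, g2 with Gram matrix [0 1; 1 a] _|_ [0 1; 1 c]: the invariant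
   provides the isotropic vector g1 orthogonal to v and w.  Since (a, c) is
   not (0, 0), this form is similar to <<1, w'>> for w' = 1 or w' = a c. *)

From HB Require Import structures.
From mathcomp Require Import all_boot all_order all_algebra all_field.
From mathcomp Require Import mxtens sesquilinear ring.
From Stdlib Require Import Classical.
Import Order.TTheory GRing.Theory.
Set Implicit Arguments. Unset Strict Implicit. Unset Printing Implicit Defensive.
Local Open Scope ring_scope.

Local Notation "''[' u , v ]_ A" := (form idfun A u v) : ring_scope.

Section Forms.
Variable F : fieldType.
Implicit Types (n : nat).

Lemma formE n (A : 'M[F]_n) u v : '[u, v]_A = (u *m A *m v^T) 0 0.
Proof. by rewrite /form map_mx_id. Qed.

Lemma form_sym n (A : 'M[F]_n) u v : A^T = A -> '[u, v]_A = '[v, u]_A.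
Proof.
move=> sA; rewrite !formE -[in LHS](trmxK (u *m A *m v^T)) mxE.
by rewrite !trmx_mul trmxK sA mulmxA.
Qed.

Lemma formZZ n (A : 'M[F]_n) c x : '[c *: x, c *: x]_A = c ^+ 2 * '[x, x]_A.
Proof. by rewrite formZl formZr mulrA expr2. Qed.

Lemma form_congr n (A P : 'M[F]_n) u v : '[u, v]_(P *m A *m P^T) = '[u *m P, v *m P]_A.
Proof. by rewrite !formE trmx_mul !mulmxA. Qed.

Lemma gram_mxE m n (Q : 'M[F]_(m, n)) (A : 'M[F]_n) i j :
  (Q *m A *m Q^T) i j = '[row i Q, row j Q]_A.
Proof.
rewrite formE !mxE; apply: eq_bigr => k _; rewrite !mxE; congr (_ * _).
by apply: eq_bigr => l _; rewrite !mxE.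
Qed.

Lemma unitmx_of_gram n (P A : 'M[F]_n) : P *m A *m P^T \in unitmx -> P \in unitmx.
Proof. by rewrite !unitmx_mul => /andP[/andP[]]. Qed.

Lemma form_delta_r n (A : 'M[F]_n) u k : '[u, 'e_k]_A = (u *m A) 0 k.
Proof. by rewrite formE trmx_delta -colE mxE. Qed.

Lemma form_dual n (A : 'M[F]_n) u : A \in unitmx -> u != 0 -> exists w, '[u, w]_A = 1.
Proof.
move=> uA u0; have /rV0Pn[j uAj] : u *m A != 0 by rewrite mulmx_free_eq0 ?row_free_unit.
by exists (((u *m A) 0 j)^-1 *: 'e_j); rewrite formZr form_delta_r mulVf.
Qed.

Lemma exists_orthogonal2 n (A : 'M[F]_n) v w : (2 < n)%N ->
  exists2 g, g != 0 & '[g, v]_A = 0 /\ '[g, w]_A = 0.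
Proof.
move=> n_gt2; set N := A *m (col_mx v w)^T.
have : kermx N != 0.
  rewrite -mxrank_eq0 mxrank_ker -lt0n subn_gt0.
  exact: leq_ltn_trans (rank_leq_col N) n_gt2.
case/matrix0Pn => i [j kij]; exists (row i (kermx N)).
  by apply/rV0Pn; exists j; rewrite mxE.
have : row i (kermx N) *m N = 0 by rewrite -row_mul mulmx_ker row0.
rewrite /N tr_col_mx mulmxA mul_mx_row => /eqP.
by rewrite row_mx_eq0 => /andP[/eqP gv /eqP gw]; rewrite !formE gv gw mxE.
Qed.

End Forms.

Lemma form_map (aF rF : fieldType) (f : {rmorphism aF -> rF}) n (A : 'M[aF]_n) u v :
  '[map_mx f u, map_mx f v]_(map_mx f A) = f '[u, v]_A.
Proof. by rewrite !formE map_trmx -!map_mxM mxE. Qed.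

Section Isometry.
Variables (F : fieldType) (n : nat).
Implicit Types (A B C : 'M[F]_n).

Definition nonalternating A : Prop := exists x, '[x, x]_A != 0.

Definition nullcone_coisotropic A : Prop :=
  forall x, (forall y, '[y, y]_A = 0 -> '[x, y]_A = 0) -> '[x, x]_A = 0.

Lemma bf_isotropicP A : bf_isotropic A <-> exists2 v, v != 0 & '[v, v]_A = 0.
Proof.
split=> [[v [v0 vA]] | [v v0 vA]]; exists v; rewrite ?formE ?vA ?mxE //.
by split; rewrite // [LHS]mx11_scalar -formE vA raddf0.
Qed.

Lemma bf_isometric_trans A B C : bf_isometric A B -> bf_isometric B C -> bf_isometric A C.
Proof.
move=> [P [uP ->]] [Q [uQ ->]]; exists (Q *m P).
by rewrite unitmx_mul uP uQ trmx_mul !mulmxA.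
Qed.

Lemma bf_similar_isometric A B C : bf_isometric A B -> bf_similar B C -> bf_similar A C.
Proof. by move=> AB [c [c0 BC]]; exists c; split; last exact: bf_isometric_trans BC. Qed.

Lemma unitmx_isometric A B : bf_isometric A B -> A \in unitmx -> B \in unitmx.
Proof. by move=> [P [uP ->]] uA; rewrite !unitmx_mul uP uA unitmx_tr uP. Qed.

Lemma isotropic_isometric A B : bf_isometric A B -> bf_isotropic B -> bf_isotropic A.
Proof.
move=> [P [uP ->]] /bf_isotropicP[v v0]; rewrite form_congr => vP0.
by apply/bf_isotropicP; exists (v *m P); rewrite // mulmx_free_eq0 ?row_free_unit.
Qed.

Lemma nonalternating_isometric A B : bf_isometric A B -> nonalternating A -> nonalternating B.
Proof.
by move=> [P [uP ->]] [x xA]; exists (x *m invmx P); rewrite form_congr mulmxKV.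
Qed.

Lemma coisotropic_isometric A B :
  bf_isometric A B -> nullcone_coisotropic A -> nullcone_coisotropic B.
Proof.
move=> [P [uP ->]] coA x xZ; rewrite form_congr; apply: coA => y y0.
by have := xZ (y *m invmx P); rewrite !form_congr mulmxKV //; apply.
Qed.

End Isometry.

Lemma isotropic_map (aF rF : fieldType) (f : {rmorphism aF -> rF}) n (A : 'M[aF]_n) :
  bf_isotropic A -> bf_isotropic (map_mx f A).
Proof.
case/bf_isotropicP => v v0 vA; apply/bf_isotropicP; exists (map_mx f v).
  by rewrite map_mx_eq0.
by rewrite form_map vA rmorph0.
Qed.

Lemma nonalternating_map (aF rF : fieldType) (f : {rmorphism aF -> rF}) n (A : 'M[aF]_n) :
  nonalternating A -> nonalternating (map_mx f A).
Proof. by case=> x xA; exists (map_mx f x); rewrite form_map fmorph_eq0. Qed.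

Section TensorPair.
Variable F : fieldType.

Lemma tensmxDl m n p q (A B : 'M[F]_(m, n)) (C : 'M[F]_(p, q)) :
  (A + B) *t C = A *t C + B *t C.
Proof.
apply/matrixP => i j; case: (mxtens_indexP i) => i1 i2; case: (mxtens_indexP j) => j1 j2.
by rewrite tensmxE [in RHS]mxE !tensmxE mxE mulrDl.
Qed.

Lemma tensmxZl m n p q c (A : 'M[F]_(m, n)) (C : 'M[F]_(p, q)) :
  (c *: A) *t C = c *: (A *t C).
Proof.
apply/matrixP => i j; case: (mxtens_indexP i) => i1 i2; case: (mxtens_indexP j) => j1 j2.
by rewrite tensmxE [in RHS]mxE !tensmxE mxE mulrA.
Qed.

Lemma tens_rowE m n (x : 'rV[F]_m) (y : 'rV[F]_n) i j :
  (x *t y) 0 (mxtens_index (i, j)) = x 0 i * y 0 j.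
Proof. by rewrite -tensmxE; congr ((x *t y) _ _); apply: val_inj. Qed.

Lemma form_tens m n (A : 'M[F]_m) (C : 'M[F]_n) (x y : 'rV_m) (u w : 'rV_n) :
  '[x *t u, y *t w]_(A *t C) = '[x, y]_A * '[u, w]_C.
Proof.
rewrite !formE; change ((x *t u *m (A *t C) *m (y *t w)^T) (0 : 'I_(1 * 1)) (0 : 'I_(1 * 1))
  = (x *m A *m y^T) 0 0 * (u *m C *m w^T) 0 0).
by rewrite trmx_tens !tensmx_mul -tensmxE; congr ((_ *t _) _ _); apply: val_inj.
Qed.

Variable n : nat.
Implicit Types (x y : 'rV[F]_n) (X : 'rV[F]_(n * 2)).

(* ['rV_(n * 2)] viewed as pairs of vectors of ['rV_n], matching [A *t pf1 a]. *)
Definition tpair x1 x2 : 'rV[F]_(n * 2) :=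
  x1 *t ('e_ord0 : 'rV_2) + x2 *t ('e_ord_max : 'rV_2).
Definition tfst X : 'rV[F]_n := \row_i X 0 (mxtens_index (i, ord0)).
Definition tsnd X : 'rV[F]_n := \row_i X 0 (mxtens_index (i, ord_max)).

Lemma tfst_tpair x1 x2 : tfst (tpair x1 x2) = x1.
Proof. by apply/rowP => i; rewrite mxE /tpair mxE !tens_rowE !mxE /= mulr1 mulr0 addr0. Qed.

Lemma tsnd_tpair x1 x2 : tsnd (tpair x1 x2) = x2.
Proof. by apply/rowP => i; rewrite mxE /tpair mxE !tens_rowE !mxE /= mulr1 mulr0 add0r. Qed.

Lemma tpairE X : X = tpair (tfst X) (tsnd X).
Proof.
apply/rowP => k; case: (mxtens_indexP k) => i j; rewrite /tpair [RHS]mxE !tens_rowE !mxE.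
by case: j => -[|[|//]] j2 /=; rewrite ?mulr1 ?mulr0 ?addr0 ?add0r; congr (X 0 _);
   apply: val_inj.
Qed.

Lemma tpairP X : exists x1 x2, X = tpair x1 x2.
Proof. by exists (tfst X), (tsnd X); apply: tpairE. Qed.

Lemma tpairD x1 x2 y1 y2 : tpair x1 x2 + tpair y1 y2 = tpair (x1 + y1) (x2 + y2).
Proof. by rewrite /tpair !tensmxDl addrACA. Qed.

Lemma tpairZ c x1 x2 : c *: tpair x1 x2 = tpair (c *: x1) (c *: x2).
Proof. by rewrite /tpair !tensmxZl scalerDr. Qed.

Lemma tpair_eq0 x1 x2 : (tpair x1 x2 == 0) = (x1 == 0) && (x2 == 0).
Proof.
apply/eqP/andP => [t0 | [/eqP-> /eqP->]]; last by rewrite /tpair !tens0mx addr0.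
move: (tfst_tpair x1 x2) (tsnd_tpair x1 x2); rewrite t0 => <- <-.
by split; apply/eqP/rowP => i; rewrite !mxE.
Qed.

Lemma form_tpair (A : 'M[F]_n) a x1 x2 y1 y2 :
  '[tpair x1 x2, tpair y1 y2]_(A *t pf1 a) = '[x1, y1]_A + a * '[x2, y2]_A.
Proof.
rewrite formDl !formDr !form_tens !formee !mxE /=.
by rewrite !mulr1n !mulr0n !mulr0 !addr0 add0r mulr1 mulrC.
Qed.

End TensorPair.

Section TensorPf1.
Variables (F : fieldType) (n : nat).
Implicit Type B : 'M[F]_n.

Lemma tensmx_unitl m (C : 'M[F]_m.+1) B : B *t C \in unitmx -> B \in unitmx.
Proof.
move=> uBC; rewrite -row_free_unit -kermx_eq0; apply/eqP/matrixP => i j.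
have : kermx B *t (1%:M : 'M_m.+1) *m (B *t C) = 0 by rewrite tensmx_mul mulmx_ker tens0mx.
move/eqP; rewrite mulmx_free_eq0 ?row_free_unit // => /eqP/matrixP/(_ (mxtens_index (i, 0))).
by move/(_ (mxtens_index (j, 0))); rewrite tensmxE !mxE eqxx mulr1.
Qed.

Lemma isotropic_tens_pf1 B a : bf_isotropic B -> bf_isotropic (B *t pf1 a).
Proof.
move=> /bf_isotropicP[v v0 vB]; apply/bf_isotropicP; exists (tpair v 0).
  by rewrite tpair_eq0 negb_and v0.
by rewrite form_tpair vB form0l mulr0 addr0.
Qed.

Lemma nonalternating_tens_pf1 B a : nonalternating (B *t pf1 a) -> nonalternating B.
Proof.
case=> X; have [x1 [x2 ->]] := tpairP X; rewrite form_tpair => qX.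
have [q1|q1] := eqVneq '[x1, x1]_B 0; last by exists x1.
by exists x2; apply: contraNneq qX => q2; rewrite q1 q2 mulr0 addr0.
Qed.

End TensorPf1.

Section Pfister.
Variable F : fieldType.
Implicit Type s : seq F.

Lemma pdim_gt0 s : (0 < pdim s)%N.
Proof. by elim: s => //= a s IH; rewrite muln_gt0 IH. Qed.

Lemma pfister_sym s : (pfister s)^T = pfister s.
Proof.
elim: s => [|a s IH] /=; first exact: tr_scalar_mx.
by rewrite trmx_tens IH /pf1 tr_diag_mx.
Qed.

Lemma pf1_unit (a : F) : a != 0 -> pf1 a \in unitmx.
Proof.
move=> a0; rewrite unitmxE det_diag unitfE; apply/prodf_neq0 => i _.
by rewrite mxE; case: ifP; rewrite ?oner_neq0.
Qed.

Lemma pfister_unit s : all (fun a => a != 0) s -> pfister s \in unitmx.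
Proof.
elim: s => [|a s IH] /=; first by rewrite unitmx1.
case/andP=> a0 /IH us; apply: tensmx_unit => //; last exact: pf1_unit.
by rewrite -lt0n pdim_gt0.
Qed.

Lemma pfister_diag_neq0 s i : all (fun a => a != 0) s -> pfister s i i != 0.
Proof.
elim: s i => [|a s IH] i /=; first by rewrite !mxE eqxx oner_neq0.
case/andP => a0 /IH ns; case: (mxtens_indexP i) => i1 i2.
by rewrite tensmxE mulf_neq0 // /pf1 !mxE eqxx mulr1n; case: ifP; rewrite ?oner_neq0.
Qed.

End Pfister.

(* [ring: (pcharf0 pK)] uses [2 = 0] reliably only on goals of the form [p = 0]. *)
Ltac pchar2_ring pK := apply/eqP; rewrite -subr_eq0; apply/eqP; ring: (pcharf0 pK).

Section Char2.
Variable K : fieldType.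
Hypothesis pK : 2 \in [pchar K].

Lemma formD_pchar2 n (A : 'M[K]_n) x y :
  A^T = A -> '[x + y, x + y]_A = '[x, x]_A + '[y, y]_A.
Proof. by move=> sA; rewrite formDl !formDr (form_sym y x sA); pchar2_ring pK. Qed.

Lemma formB_pchar2 n (A : 'M[K]_n) x y :
  A^T = A -> '[x - y, x - y]_A = '[x, x]_A + '[y, y]_A.
Proof. by move=> sA; rewrite formD_pchar2 // formNl formNr opprK. Qed.

Lemma form_alternating_pchar2 n (G : 'M[K]_n) :
  G^T = G -> (forall i, G i i = 0) -> forall x, '[x, x]_G = 0.
Proof.
move=> sG G0 x; rewrite (row_sum_delta x).
elim/big_rec: _ => [|i y _ IH]; first by rewrite form0l.
by rewrite formD_pchar2 // IH formZZ formee G0 mulr0 addr0.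
Qed.

End Char2.

Section FormAlgebra.
Variable K : fieldType.
Hypothesis pK : 2 \in [pchar K].
Local Notation mulType n := ('rV[K]_n -> 'rV[K]_n -> 'rV[K]_n).

Record form_algebra n (A : 'M[K]_n) (mul : mulType n) : Prop := FormAlgebra {
  falg_mulC : commutative mul;
  falg_mulDr : right_distributive mul +%R;
  falg_mulZr : forall c x y, mul x (c *: y) = c *: mul x y;
  falg_formM : forall u x y, '[u, mul x y]_A = '[x, mul u y]_A;
  falg_mulKq : forall x y, mul x (mul x y) = '[x, x]_A *: y
}.

Lemma falg_formMM n (A : 'M[K]_n) mul x y :
  form_algebra A mul -> '[mul x y, mul x y]_A = '[x, x]_A * '[y, y]_A.
Proof.
case=> mC _ _ fM mK.
by rewrite fM [mul (mul x y) y]mC [mul x y]mC mK formZr mulrC.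
Qed.

Lemma coisotropic_form_algebra n (A : 'M[K]_n) mul :
  A \in unitmx -> bf_isotropic A -> form_algebra A mul -> nullcone_coisotropic A.
Proof.
move=> uA /bf_isotropicP[w w0 wZ] fa x xZ.
have [h wh] := form_dual uA w0.
have -> : '[x, x]_A = '[w, mul x (mul x h)]_A by rewrite (falg_mulKq fa) formZr wh mulr1.
by rewrite (falg_formM fa) xZ // falg_formMM // wZ mul0r.
Qed.

Lemma form_algebra1 : form_algebra (1%:M : 'M[K]_1) (fun x y => x 0 0 *: y).
Proof.
have form1 (x y : 'rV[K]_1) : '[x, y]_(1%:M) = x 0 0 * y 0 0.
  by rewrite formE mulmx1 mxE big_ord1 mxE.
split.
- by move=> x y; apply/rowP => i; rewrite !mxE (ord1 i) mulrC.
- by move=> x y z; rewrite scalerDr.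
- by move=> c x y; rewrite !scalerA mulrC.
- by move=> u x y; rewrite !formZr !form1 /= mulrCA.
- by move=> x y; rewrite scalerA form1.
Qed.

(* Multiplication in A[t]/(t^2 - a), with [tpair x1 x2] standing for x1 + x2 t. *)
Definition dmul n a (mul : mulType n) (X Y : 'rV[K]_(n * 2)) : 'rV[K]_(n * 2) :=
  tpair (mul (tfst X) (tfst Y) + a *: mul (tsnd X) (tsnd Y))
        (mul (tfst X) (tsnd Y) + mul (tsnd X) (tfst Y)).

Lemma dmul_tpair n a (mul : mulType n) x1 x2 y1 y2 :
  dmul a mul (tpair x1 x2) (tpair y1 y2) =
  tpair (mul x1 y1 + a *: mul x2 y2) (mul x1 y2 + mul x2 y1).
Proof. by rewrite /dmul !tfst_tpair !tsnd_tpair. Qed.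

Lemma form_algebra_tens n (A : 'M[K]_n) a mul :
  A^T = A -> form_algebra A mul -> form_algebra (A *t pf1 a) (dmul a mul).
Proof.
move=> sA [mC mD mZ fM mK].
have mDl : left_distributive mul +%R by move=> x y z; rewrite !(mC _ z) mD.
have mulK_polar x y z : mul x (mul y z) + mul y (mul x z) = 0.
  have := mK (x + y) z; rewrite formD_pchar2 // scalerDl !mDl !mD !mK.
  set qx := _ *: z; set qy := _ *: z => eq_q; apply: (addrI (qx + qy)).
  by rewrite -[in RHS]eq_q addr0 [mul y _ + qy]addrC addrACA.
split.
- move=> X Y; have [x1 [x2 ->]] := tpairP X; have [y1 [y2 ->]] := tpairP Y.
  by rewrite !dmul_tpair (mC x1) (mC x2) (mC x1 y2) (addrC (mul y2 x1)) (mC x2 y1).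
- move=> X Y Z; have [x1 [x2 ->]] := tpairP X; have [y1 [y2 ->]] := tpairP Y.
  have [z1 [z2 ->]] := tpairP Z.
  by rewrite tpairD !dmul_tpair tpairD !mD scalerDr; congr tpair; apply: addrACA.
- move=> c X Y; have [x1 [x2 ->]] := tpairP X; have [y1 [y2 ->]] := tpairP Y.
  by rewrite tpairZ !dmul_tpair tpairZ !mZ !scalerDr !scalerA mulrC.
- move=> U X Y; have [u1 [u2 ->]] := tpairP U; have [x1 [x2 ->]] := tpairP X.
  have [y1 [y2 ->]] := tpairP Y.
  rewrite !dmul_tpair !form_tpair !formDr !formZr /=.
  by rewrite (fM u1 x1) (fM u1 x2) (fM u2 x1) (fM u2 x2); ring.
- move=> X Y; have [x1 [x2 ->]] := tpairP X; have [y1 [y2 ->]] := tpairP Y.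
  rewrite !dmul_tpair form_tpair tpairZ !mD !mZ !mK !scalerDl -!scalerA.
  congr tpair.
  + by rewrite -addrA -scalerDr addrA mulK_polar add0r.
  + by rewrite -addrA (addrA (mul x1 _)) mulK_polar add0r.
Qed.

Lemma pfister_form_algebra (s : seq K) : exists mul, form_algebra (pfister s) mul.
Proof.
elim: s => [|a s [mul fa]]; first by exists (fun x y => x 0 0 *: y); apply: form_algebra1.
by exists (dmul a mul); apply: form_algebra_tens fa; apply: pfister_sym.
Qed.

Lemma isotropic_bf_is_pfister m (Phi : 'M[K]_m) :
  bf_is_pfister Phi -> bf_isotropic Phi ->
  [/\ Phi \in unitmx, nonalternating Phi & nullcone_coisotropic Phi].
Proof.
case=> s [s0 [e iso]]; case: m / e Phi iso => Phi; rewrite castmx_id => iso isoPhi.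
have [mul fa] := pfister_form_algebra s.
split.
- exact: unitmx_isometric iso (pfister_unit s0).
- apply: nonalternating_isometric iso _; exists 'e_(Ordinal (pdim_gt0 s)).
  by rewrite formee pfister_diag_neq0.
- apply: (coisotropic_isometric iso (coisotropic_form_algebra (pfister_unit s0) _ fa)).
  exact: isotropic_isometric iso isoPhi.
Qed.

End FormAlgebra.

Section QuadraticExtension.
Variables (F : fieldType) (L : fieldExtType F) (r : L) (alpha : F).
Hypotheses (dimL : \dim {:L} = 2%N) (r_notin_F : forall a : F, r != a%:A).
Local Notation mapL := (map_mx (in_alg L)).

Lemma quadratic_ext_decomp l : exists a b : F, l = in_alg L a + r * in_alg L b.
Proof.
have free_r1 : free [:: r; 1].
  rewrite free_cons seq1_free oner_neq0 andbT span_seq1.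
  by apply/vlineP => -[k rk]; move: (r_notin_F k); rewrite rk eqxx.
have span_r1 : <<[:: r; 1%R]>>%VS = fullv.
  by apply/eqP; rewrite eqEdim subvf /= (eqP free_r1) dimL.
have : l \in <<[:: r; 1%R]>>%VS by rewrite span_r1 memvf.
rewrite span_cons span_seq1 => /memv_addP[_ /vlineP[b ->] [_ /vlineP[a ->] ->]].
by exists a, b; rewrite addrC !in_algE mulr_algr.
Qed.

Lemma quadratic_ext_free a b : in_alg L a + r * in_alg L b = 0 -> a = 0 /\ b = 0.
Proof.
move=> ab0; have [b0|b0] := eqVneq b 0.
  by move: ab0; rewrite b0 rmorph0 mulr0 addr0 => /eqP; rewrite fmorph_eq0 => /eqP.
have bL0 : in_alg L b != 0 by rewrite fmorph_eq0.
case/eqP: (r_notin_F (- a / b)); apply: (mulIf bL0).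
rewrite -[(- a / b)%:A]/(in_alg L _) fmorph_div rmorphN divfK //.
by rewrite -(addKr (in_alg L a) (r * _)) ab0 addr0.
Qed.

Lemma rV_quadratic_ext_decomp n (X : 'rV[L]_n) :
  exists x1 x2 : 'rV[F]_n, X = mapL x1 + r *: mapL x2.
Proof.
have dec l : exists p : F * F, l == in_alg L p.1 + r * in_alg L p.2.
  by have [a [b ->]] := quadratic_ext_decomp l; exists (a, b).
pose c l := xchoose (dec l).
exists (\row_i (c (X 0 i)).1), (\row_i (c (X 0 i)).2); apply/rowP => i.
by rewrite !mxE; apply/eqP; apply: (xchooseP (dec (X 0 i))).
Qed.

Hypothesis r2 : r ^+ 2 = alpha%:A.

Lemma form_quadratic_ext n (B : 'M[F]_n) x1 x2 y1 y2 :
  '[mapL x1 + r *: mapL x2, mapL y1 + r *: mapL y2]_(mapL B) =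
  in_alg L ('[x1, y1]_B + alpha * '[x2, y2]_B) + r * in_alg L ('[x1, y2]_B + '[x2, y1]_B).
Proof.
rewrite formDl !formDr !formZl !formZr !form_map !rmorphD !rmorphM /=.
by rewrite -r2; ring.
Qed.

Lemma coisotropic_quadratic_ext n (B : 'M[F]_n) : 2 \in [pchar F] -> B^T = B ->
  nullcone_coisotropic (B *t pf1 alpha) -> nullcone_coisotropic (mapL B).
Proof.
move=> pF sB coPhi X XZ; have [x1 [x2 eX]] := rV_quadratic_ext_decomp X; subst X.
have cross0 x y : '[x, y]_B + '[y, x]_B = 0 by rewrite (form_sym y x sB) addrr_pchar2.
have qPhi : '[x1, x1]_B + alpha * '[x2, x2]_B = 0.
  rewrite -form_tpair; apply: coPhi => Y; have [y1 [y2 ->]] := tpairP Y.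
  rewrite !form_tpair => qY; have := XZ (mapL y1 + r *: mapL y2).
  rewrite !form_quadratic_ext qY cross0 !rmorph0 mulr0 addr0 => /(_ erefl).
  by case/quadratic_ext_free.
by rewrite form_quadratic_ext qPhi cross0 !rmorph0 mulr0 addr0.
Qed.

End QuadraticExtension.

Section HyperbolicPair.
Variables (K : fieldType) (n : nat) (M : 'M[K]_n) (v w : 'rV[K]_n).
Hypotheses (sM : M^T = M) (vv : '[v, v]_M = 0) (vw : '[v, w]_M = 1).

Let wv : '[w, v]_M = 1. Proof. by rewrite form_sym. Qed.

Definition plane_perp_proj y :=
  y - ('[y, w]_M - '[w, w]_M * '[y, v]_M) *: v - '[y, v]_M *: w.

Lemma plane_perp_projP y :
  '[plane_perp_proj y, v]_M = 0 /\ '[plane_perp_proj y, w]_M = 0.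
Proof. by rewrite !formDl !formNl !formZl vv vw wv; split; ring. Qed.

Hypothesis pK : 2 \in [pchar K].

Lemma exists_isotropic_perp_plane : (2 < n)%N -> nullcone_coisotropic M ->
  exists g, [/\ g != 0, '[g, v]_M = 0, '[g, w]_M = 0 & '[g, g]_M = 0].
Proof.
move=> n_gt2 coM; apply: NNPP => noiso.
have aniso g : '[g, v]_M = 0 -> '[g, w]_M = 0 -> '[g, g]_M = 0 -> g = 0.
  by move=> gv gw gg; apply/eqP/negPn/negP => g0; apply: noiso; exists g.
have perp_v y : '[y, y]_M = 0 -> '[y, v]_M = 0 -> y = '[y, w]_M *: v.
  move=> yy yv; apply/eqP; rewrite -subr_eq0; apply/eqP/aniso.
  - by rewrite formDl formNl formZl yv vv mulr0 subrr.
  - by rewrite formDl formNl formZl vw mulr1 subrr.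
  - by rewrite formB_pchar2 // formZZ yy vv mulr0 addr0.
have [g0 g00 [g0v g0w]] := exists_orthogonal2 M v w n_gt2.
have : '[g0, g0]_M != 0 by apply: contra g00 => /eqP gg; apply/eqP/aniso.
suff [X <- XZ] : exists2 X, '[X, X]_M = '[g0, g0]_M &
    forall Y, '[Y, Y]_M = 0 -> '[X, Y]_M = 0.
  by rewrite coM ?eqxx.
have [[k [kk kv]] | nok] := classic (exists k, '[k, k]_M = 0 /\ '[k, v]_M = 1).
- exists (g0 - '[g0, k]_M *: v); first by rewrite formB_pchar2 // formZZ vv mulr0 addr0.
  move=> Y YY; set y := Y - '[Y, v]_M *: k.
  have yy : '[y, y]_M = 0 by rewrite formB_pchar2 // formZZ kk YY mulr0 addr0.
  have yv : '[y, v]_M = 0 by rewrite formDl formNl formZl kv mulr1 subrr.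
  rewrite -[Y](subrK ('[Y, v]_M *: k)) -/y (perp_v y yy yv).
  rewrite formDr !formZr !formDl !formNl !formZl g0v vv (form_sym v k sM) kv /=; ring.
- exists g0 => // Y YY; rewrite (perp_v Y YY) ?formZr ?g0v ?mulr0 //.
  apply/eqP/negPn/negP => Yv; apply: nok; exists ('[Y, v]_M^-1 *: Y).
  by rewrite formZZ YY mulr0 formZl mulVf.
Qed.

End HyperbolicPair.

Section Dimension4.
Variable K : fieldType.

Definition mx4 (l : seq (seq K)) : 'M[K]_4 := \matrix_(i, j) nth 0 (nth [::] l i) j.

Lemma sum4 (f : 'I_4 -> K) : \sum_(i < 4) f i =
  f (@Ordinal 4 0 isT) + f (@Ordinal 4 1 isT) + f (@Ordinal 4 2 isT) + f (@Ordinal 4 3 isT).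
Proof.
rewrite !big_ord_recl big_ord0 addr0 !addrA.
by congr (_ + _ + _ + _); congr f; apply: val_inj.
Qed.

Definition metabolic2 (a c : K) : 'M[K]_4 :=
  mx4 [:: [:: 0; 1; 0; 0]; [:: 1; a; 0; 0]; [:: 0; 0; 0; 1]; [:: 0; 0; 1; c]].

Lemma metabolic2_sym a c : (metabolic2 a c)^T = metabolic2 a c.
Proof.
by apply/matrixP => i j; rewrite !mxE; case: i => -[|[|[|[|//]]]] ?; case: j => -[|[|[|[|//]]]] ?.
Qed.

Lemma metabolic2_unit a c : metabolic2 a c \in unitmx.
Proof.
pose H := mx4 [:: [:: - a; 1; 0; 0]; [:: 1; 0; 0; 0]; [:: 0; 0; - c; 1]; [:: 0; 0; 1; 0]].
suff /mulmx1_unit[] : metabolic2 a c *m H = 1%:M by [].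
apply/matrixP => i j; rewrite !mxE sum4 !mxE.
by case: i => -[|[|[|[|//]]]] ?; case: j => -[|[|[|[|//]]]] ? /=; ring.
Qed.

Lemma pfister2E (x y : K) i j :
  pfister [:: x; y] i j = (i == j)%:R * nth 0 [:: 1; x; y; x * y] i.
Proof.
case: (mxtens_indexP i) => i' i3; case: (mxtens_indexP j) => j' j3.
case: (mxtens_indexP i') => i1 i2; case: (mxtens_indexP j') => j1 j2.
rewrite /= !tensmxE (ord1 i1) (ord1 j1) /pf1 !mxE.
case: i2 => -[|[|//]] ?; case: i3 => -[|[|//]] ?; case: j2 => -[|[|//]] ?;
  case: j3 => -[|[|//]] ? /=.
all: by rewrite ?mulr1n ?mulr0n ?mul1r ?mulr0 ?mul0r ?mulr1 // mulrC.
Qed.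

Hypothesis pK : 2 \in [pchar K].

Lemma metabolic2_similar_pfister a c : (a != 0) || (c != 0) ->
  exists2 w', w' != 0 & bf_similar (metabolic2 a c) (pfister [:: 1; w']).
Proof.
have simT (T : 'M[K]_4) lam w' : lam != 0 -> w' != 0 ->
    (forall i j, (T *m metabolic2 a c *m T^T) i j = lam * pfister [:: 1; w'] i j) ->
    exists2 w', w' != 0 & bf_similar (metabolic2 a c) (pfister [:: 1; w']).
  move=> lam0 w'0 TG; exists w' => //; exists lam; split => //; exists T.
  have E : lam *: pfister [:: 1; w'] = T *m metabolic2 a c *m T^T.
    by apply/matrixP => i j; rewrite TG mxE.
  split => //; apply: (unitmx_of_gram (A := metabolic2 a c)).
  by rewrite -E unitmxZ ?unitfE //; apply: (@pfister_unit _ [:: 1; w']); rewrite /= oner_neq0 w'0.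
have [a0|a0] := eqVneq a 0; have [c0|c0] := eqVneq c 0 => //= _.
- apply: (simT (mx4 [:: [:: 0; 1; 0; 1]; [:: c; 1; 0; 1]; [:: c; 0; 0; 1]; [:: 0; 0; c; 1]]) c 1);
    rewrite ?oner_neq0 // => i j.
  rewrite pfister2E a0 !mxE sum4 !mxE !sum4 !mxE.
  by case: i => -[|[|[|[|//]]]] ?; case: j => -[|[|[|[|//]]]] ? /=; pchar2_ring pK.
- apply: (simT (mx4 [:: [:: 0; 1; 0; 1]; [:: 0; 1; a; 1]; [:: 0; 1; a; 0]; [:: a; 1; 0; 0]]) a 1);
    rewrite ?oner_neq0 // => i j.
  rewrite pfister2E c0 !mxE sum4 !mxE !sum4 !mxE.
  by case: i => -[|[|[|[|//]]]] ?; case: j => -[|[|[|[|//]]]] ? /=; pchar2_ring pK.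
- apply: (simT (mx4 [:: [:: 0; 1; 0; 0]; [:: a; 1; 0; 0]; [:: 0; 0; 0; a]; [:: 0; 0; a * c; a]])
    a (a * c)); rewrite ?mulf_neq0 // => i j.
  rewrite pfister2E !mxE sum4 !mxE !sum4 !mxE.
  by case: i => -[|[|[|[|//]]]] ?; case: j => -[|[|[|[|//]]]] ? /=; pchar2_ring pK.
Qed.

Lemma dim4_similar_pfister (M : 'M[K]_4) :
  M^T = M -> M \in unitmx -> nonalternating M -> bf_isotropic M -> nullcone_coisotropic M ->
  exists2 w', w' != 0 & bf_similar M (pfister [:: 1; w']).
Proof.
move=> sM uM naM /bf_isotropicP[v v0 vv] coM.
have [w vw] := form_dual uM v0.
have [g1 [g10 g1v g1w g1g1]] := exists_isotropic_perp_plane sM vv vw pK isT coM.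
have [h g1h] := form_dual uM g10.
pose g2 := plane_perp_proj M v w h; have [g2v g2w] := plane_perp_projP sM vv vw h.
have g1g2 : '[g1, g2]_M = 1 by rewrite !formDr !formNr !formZr g1h g1v g1w /=; ring.
pose Q := \matrix_(i < 4) nth 0 [:: v; w; g1; g2] i.
have QM : Q *m M *m Q^T = metabolic2 '[w, w]_M '[g2, g2]_M.
  apply/matrixP => i j; rewrite gram_mxE !rowK mxE.
  have sym x y : '[x, y]_M = '[y, x]_M := form_sym x y sM.
  case: i => -[|[|[|[|//]]]] ?; case: j => -[|[|[|[|//]]]] ? /=;
    by rewrite ?(sym v g1) ?(sym v g2) ?(sym w v) ?(sym w g1) ?(sym w g2) ?(sym g2 g1).
have isoQ : bf_isometric M (metabolic2 '[w, w]_M '[g2, g2]_M).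
  exists Q; split; last by rewrite QM.
  by apply: (unitmx_of_gram (A := M)); rewrite QM metabolic2_unit.
have [ac | ] := boolP (('[w, w]_M != 0) || ('[g2, g2]_M != 0)).
  have [w' w'0 sim] := metabolic2_similar_pfister ac.
  by exists w' => //; apply: bf_similar_isometric sim.
rewrite negb_or !negbK => /andP[/eqP a0 /eqP c0].
have [y] := nonalternating_isometric isoQ naM; rewrite a0 c0.
rewrite form_alternating_pchar2 ?eqxx //; first exact: metabolic2_sym.
by case=> -[|[|[|[|//]]]] ?; rewrite mxE.
Qed.

End Dimension4.

Unset Implicit Arguments.

Theorem lemma5p4 (F : fieldType) (L : fieldExtType F)
    (B : 'M[F]_4) (alpha : F) (r : L) :
  (2%N \in [pchar F])%R ->
  bf_symmetric B -> bf_isotropic B ->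
  alpha != 0 -> ~ (exists x : F, x ^+ 2 = alpha) ->
  (* L = F(sqrt alpha): a quadratic extension containing a square root r of alpha *)
  \dim {:L} = 2%N -> r ^+ 2 = alpha%:A ->
  bf_is_pfister (B *t pf1 alpha) ->
  bf_similar_to_pfister (map_mx (in_alg L) B).
Proof.
move=> pK sB isoB _ alpha_nsq dimL r2 pfPhi.
have [uPhi naPhi coPhi] := isotropic_bf_is_pfister pK pfPhi (isotropic_tens_pf1 alpha isoB).
have r_notin_F a : r != a%:A.
  apply/eqP => ra; apply: alpha_nsq; exists a; apply: (fmorph_inj (in_alg L)).
  by rewrite rmorphXn /= -ra r2.
have sBL : (map_mx (in_alg L) B)^T = map_mx (in_alg L) B by rewrite map_trmx sB.
have uBL : map_mx (in_alg L) B \in unitmx by rewrite map_unitmx (tensmx_unitl uPhi).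
have pKL : 2 \in [pchar L] := rmorph_pchar (in_alg L) pK.
have [w' w'0 sim] := dim4_similar_pfister pKL sBL uBL
  (nonalternating_map _ (nonalternating_tens_pf1 naPhi)) (isotropic_map _ isoB)
  (coisotropic_quadratic_ext dimL r_notin_F r2 pK sB coPhi).
exists [:: 1; w']; split; first by rewrite /= oner_neq0 w'0.
by exists erefl; rewrite castmx_id.
Qed.
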